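(* Let $T=\bigoplus_{i=1}^{n-1}T_i$ be a basic maximal rigid object in $\mathcal{C}_n$ and $T_k$ one of its indecomposable summands. (i) Exactly $\operatorname{ql}T_k$ of the indecomposable summands of $T$ lie in $\mathcal{W}_{T_k}$. (ii) If $\operatorname{ql}T_k>1$, there is a subwing triple $(T_k;T_{k'},T_{k''})$ such that each of $T_{k'},T_{k''}$ is either a summand of $T$ or zero, all indecomposable summands of $T$ other than $T_k$ that lie in $\mathcal{W}_{T_k}$ lie in $\mathcal{W}_{T_{k'}}\cup\mathcal{W}_{T_{k''}}$, and exactly $\operatorname{ql}T_{k'}$ of them lie in $\mathcal{W}_{T_{k'}}$ and exactly $\operatorname{ql}T_{k''}$ lie in $\mathcal{W}_{T_{k''}}$.
   Context: Let $k$ be algebraically closed, $n\ge2$, $\mathcal{T}_n$ the tube of rank $n$ (finite-dimensional nilpotent representations of the cyclically oriented $\tilde A_{n-1}$-quiver; AR-translation $\tau$), $\mathcal{C}_n=D^b(\mathcal{T}_n)/\tau^{-1}[1]$ the cluster tube, with indecomposables identified with those of $\mathcal{T}_n$. Indecomposables have coordinates $(a,b)$, $a\in\mathbb{Z}/n$, $b\ge1$ the quasilength $\operatorname{ql}$, with $\tau(a,b)=(a-1,b)$ and irreducible maps $(a,b)\to(a,b+1)$ and $(a,b)\to(a+1,b-1)$. For $X=(a,i)$, $i\le n-1$, the wing $\mathcal{W}_X$ is $\{(a+s,i'):s\ge0,i'\ge1,s+i'\le i\}$; $\mathcal{W}_0=\emptyset$ and $\operatorname{ql}0=0$. $T$ is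 maximal rigid if $\operatorname{Ext}^1_{\mathcal{C}_n}(T,T)=0$ and $\operatorname{Ext}^1(T\oplus X,T\oplus X)=0$ implies $X\in\operatorname{add}T$; a basic maximal rigid object has $n-1$ pairwise non-isomorphic indecomposable summands, a unique one (the top summand) of quasilength $n-1$, and all lie in its wing. A non-degenerate subwing triple $(X;Y,Z)$: $X=(a,b)$ with $3\le b\le n-1$, $Y=(a,c)$, $Z=(a+c+1,b-c-1)$ for some $1\le c\le b-2$. A degenerate subwing triple $(X;Y,Z)$: $X=(a,b)$, $2\le b\le n-1$, and either $Y=(a,b-1)$, $Z=0$, or $Y=0$, $Z=(a+1,b-1)$. *)

From mathcomp Require Import all_boot.
Set Implicit Arguments. Unset Strict Implicit. Unset Printing Implicit Defensive.

(* Indecomposable objects of the tube T_n (= of the cluster tube C_n):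
   coordinates (a,b), a in Z/n (represented by 'I_n), b >= 1 the quasilength. *)
Definition indec (n : nat) := {p : 'I_n * nat | 0 < p.2}.

Section Tube.
Variable n : nat.

Definition qpos (X : indec n) : nat := val (sval X).1.
Definition ql (X : indec n) : nat := (sval X).2.

(* The indecomposable (a,b) is the uniserial
   nilpotent representation with quasi-socle (a,1) and quasi-top (a+b-1,1);
   its quotients are (a+j,b-j), 0<=j<b, and the submodules of (c,d) are
   (c,d'), 1<=d'<=d.  A basis of Hom((a,b),(c,d)) is indexed by the j with
   (a+j,b-j) isomorphic to a submodule of (c,d), i.e. a+j = c (mod n) and
   b-j <= d. *)
Definition homdim (a b c d : nat) : nat :=
  count (fun j => ((a + j) %% n == c %% n) && (b - j <= d)) (iota 0 b).

Definition tau_pos (a : nat) : nat := (a + n.-1) %% n.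

(* dim Ext^1_{C_n}(X,Y) = dim Ext^1_T(X,Y) + dim Ext^1_T(Y,X)
                        = dim Hom_T(Y, tau X) + dim Hom_T(X, tau Y)
   (C_n = D^b(T_n)/tau^{-1}[1], T_n hereditary, AR formula). *)
Definition ext1dim (X Y : indec n) : nat :=
  homdim (qpos Y) (ql Y) (tau_pos (qpos X)) (ql X) +
  homdim (qpos X) (ql X) (tau_pos (qpos Y)) (ql Y).

(* Objects of C_n: finite direct sums of indecomposables, i.e. sequences
   (with multiplicity); the zero object is [::]. *)
Definition ext_vanish (A B : seq (indec n)) : bool :=
  all (fun X => all (fun Y => ext1dim X Y == 0) B) A.

Definition rigid (T : seq (indec n)) : bool := ext_vanish T T.

Definition in_add (X T : seq (indec n)) : bool := all (fun x => x \in T) X.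

Definition maximal_rigid (T : seq (indec n)) : Prop :=
  rigid T /\ forall X : seq (indec n), ext_vanish (T ++ X) (T ++ X) -> in_add X T.

Definition basic (T : seq (indec n)) : bool := uniq T.

(* Y lies in the wing W_X (defined for X = (a,i), i <= n-1):
   Y = (a+s, i') with s >= 0, i' >= 1, s + i' <= i.
   (s < n automatically since s + i' <= i <= n-1.) *)
Definition in_wing (X Y : indec n) : bool :=
  (ql X <= n.-1) &&
  [exists s : 'I_n, (s + ql Y <= ql X) && (qpos Y == (qpos X + s) %% n)].

(* possibly-zero indecomposable: None = 0 *)
Definition qlo (Y : option (indec n)) : nat :=
  if Y is Some y then ql y else 0.
Definition in_wingo (Y : option (indec n)) (Z : indec n) : bool :=
  if Y is Some y then in_wing y Z else false.

Definition is_ind (Y : option (indec n)) (a b : nat) : Prop :=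
  exists2 y, Y = Some y & qpos y = a %% n /\ ql y = b.

Definition nondeg_subwing_triple (X : indec n) (Y Z : option (indec n)) : Prop :=
  3 <= ql X <= n.-1 /\
  exists c, [/\ 1 <= c <= ql X - 2, is_ind Y (qpos X) c &
               is_ind Z (qpos X + c + 1) (ql X - c - 1)].

Definition deg_subwing_triple (X : indec n) (Y Z : option (indec n)) : Prop :=
  2 <= ql X <= n.-1 /\
  ((is_ind Y (qpos X) (ql X - 1) /\ Z = None) \/
   (Y = None /\ is_ind Z (qpos X + 1) (ql X - 1))).

Definition subwing_triple (X : indec n) (Y Z : option (indec n)) : Prop :=
  nondeg_subwing_triple X Y Z \/ deg_subwing_triple X Y Z.

Definition summand_or_zero (T : seq (indec n)) (Y : option (indec n)) : Prop :=
  if Y is Some y then y \in T else True.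

End Tube.

From mathcomp Require Import all_boot zify.
Set Implicit Arguments. Unset Strict Implicit. Unset Printing Implicit Defensive.

(* Rigidity forces [ql Tk <= n - 1], and inside the wing of [Tk] the tube has
   no wrap-around: an indecomposable there is an interval [s, s + l] of
   [0, ql Tk], and [Ext^1] between two of them vanishes iff the intervals do not
   cross.  A noncrossing family of intervals in a segment of length [m] has at
   most [m] members, and any smaller one can be enlarged; an object of the
   wing compatible with the summands of [T] inside the wing is compatible with
   those outside it too (they are orthogonal to [Tk]), so maximality makes the
   family of summands of [T] in the wing full.  In a full family the longest interval [0, c] other
   than the whole segment splits it into two full families on [0, c] and
   [c + 1, ql Tk], whose tops are [Y] and [Z]. *)

(* A pair [(s, l)] stands for the closed interval [s, s + l]; two intervals
   cross when they overlap without being nested. *)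
Definition crossing (p q : nat * nat) : bool :=
  [&& q.1 < p.1, p.1 <= q.1 + q.2 & q.1 + q.2 < p.1 + p.2].

Definition noncrossing (p q : nat * nat) : bool := ~~ crossing p q && ~~ crossing q p.

Definition in_segment (a m : nat) (p : nat * nat) : bool :=
  [&& a <= p.1, p.1 + p.2 <= a + m & 0 < p.2].

Definition noncrossing_family (a m : nat) (F : seq (nat * nat)) : Prop :=
  [/\ uniq F, all (in_segment a m) F & {in F &, forall p q, noncrossing p q}].

Lemma noncrossingC p q : noncrossing p q = noncrossing q p.
Proof. by rewrite /noncrossing andbC. Qed.

Lemma noncrossingxx p : noncrossing p p.
Proof. rewrite /noncrossing /crossing; lia. Qed.

Lemma noncrossing_nested p q :
  p.1 <= q.1 -> q.1 + q.2 <= p.1 + p.2 -> noncrossing p q.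
Proof. rewrite /noncrossing /crossing; lia. Qed.

Lemma noncrossing_disjoint p q : p.1 + p.2 < q.1 -> noncrossing p q.
Proof. rewrite /noncrossing /crossing; lia. Qed.

Lemma noncrossing_segment a m p : in_segment a m p -> noncrossing (a, m) p.
Proof. rewrite /in_segment => Hp; apply: noncrossing_nested => /=; lia. Qed.

Lemma size_partition (T : eqType) (x : T) (P Q : pred T) (s : seq T) :
  uniq s -> {in s, forall y, y != x -> P y || Q y} -> ~~ P x -> ~~ Q x ->
  (forall y, P y -> ~~ Q y) ->
  size s = (x \in s) + count P s + count Q s.
Proof.
move=> us sPQ Px Qx PQ; rewrite -(count_uniq_mem x us) -addnA -count_predUI.
rewrite (@eq_count _ (predI P Q) pred0) ?count_pred0 ?addn0;
  last by move=> y /=; case: (P y) (PQ y) => // /(_ isT) /negbTE.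
rewrite -(count_predC (pred1 x)); congr (_ + _); apply: eq_in_count => y ys /=.
by case: (eqVneq y x) => [->|yx]; rewrite ?(negbTE Px) ?(negbTE Qx) ?sPQ.
Qed.

Lemma noncrossing_family_filter a m a' m' F :
  noncrossing_family a m F -> noncrossing_family a' m' (filter (in_segment a' m') F).
Proof.
case=> uF _ ncF; split; first exact: filter_uniq.
  by apply/allP => p; rewrite mem_filter => /andP[].
by move=> p q; rewrite !mem_filter => /andP[_ Fp] /andP[_ Fq]; apply: ncF.
Qed.

Section Split.
Variables (a m : nat) (F : seq (nat * nat)).
Hypothesis ncF : noncrossing_family a m F.

Let c := \max_(p <- F | (p.1 == a) && (p != (a, m))) p.2.

Lemma split_point_attained : c = 0 \/ (a, c) \in F /\ (a, c) != (a, m).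
Proof.
rewrite /c big_seq_cond.
apply: (big_ind (fun x => x = 0 \/ (a, x) \in F /\ (a, x) != (a, m))) =>
  [|x y Px Py|p /and3P[Fp /eqP p1 pm]].
- by left.
- by rewrite /maxn; case: ltnP => _.
- by case: p Fp p1 pm => s l Fp /= <- pm; right.
Qed.

Lemma split_point_max p : p \in F -> p.1 = a -> p != (a, m) -> p.2 <= c.
Proof. by move=> Fp p1 pm; apply: leq_bigmax_seq; rewrite // p1 eqxx. Qed.

(* The longest proper member starting at [a] cuts [a, a + m] into the
   segments [a, a + c] and [a + c + 1, a + m]; nothing else can cross it. *)
Lemma noncrossing_split : 0 < m ->
  exists2 c, c < m &
    let L := in_segment a c in let R := in_segment (a + c + 1) (m - c - 1) in
    {in F, forall p, p != (a, m) -> L p || R p} /\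
    size F = ((a, m) \in F) + size (filter L F) + size (filter R F).
Proof.
case: ncF => uF /allP segF ncF' m0.
have splitF : {in F, forall p, p != (a, m) ->
                in_segment a c p || in_segment (a + c + 1) (m - c - 1) p}.
  move=> [s l] Fp pm; have := segF _ Fp; rewrite /in_segment /=.
  case: (eqVneq s a) => [sa|]; first by move: (split_point_max Fp sa pm) => /=; lia.
  have [c0 | [Fc _]] := split_point_attained; first by rewrite c0; lia.
  by have := ncF' _ _ Fc Fp; rewrite /noncrossing /crossing /=; lia.
have cm : c < m.
  have [-> // | [Fc acm]] := split_point_attained.
  have : c != m by apply: contraNneq acm => ->.
  by move: (segF _ Fc); rewrite /in_segment /=; lia.
exists c => //; split=> //.
by rewrite !size_filter; apply: size_partition; rewrite // /in_segment /=; lia.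
Qed.
End Split.

Lemma noncrossing_family_size m a F : noncrossing_family a m F -> size F <= m.
Proof.
elim/ltn_ind: m a F => m IH a F ncF.
have [m0 | m_gt0] := posnP m.
  case: ncF => _ + _; rewrite m0; case: F => //= p F /andP[+ _].
  by rewrite /in_segment; lia.
have [c cm [_ ->]] := noncrossing_split ncF m_gt0.
have left := IH c cm a _ (noncrossing_family_filter _ _ ncF).
have right := IH (m - c - 1) ltac:(lia) (a + c + 1) _ (noncrossing_family_filter _ _ ncF).
by have := leq_b1 ((a, m) \in F); lia.
Qed.

Lemma noncrossing_family_full_top m a F :
  noncrossing_family a m F -> size F = m -> 0 < m -> (a, m) \in F.
Proof.
move=> ncF sizeF m_gt0; have [c cm [_]] := noncrossing_split ncF m_gt0.
have := noncrossing_family_size (noncrossing_family_filter a c ncF).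
have := noncrossing_family_size (noncrossing_family_filter (a + c + 1) (m - c - 1) ncF).
by case: ((a, m) \in F); lia.
Qed.

Lemma noncrossing_family_full_split m a F :
  noncrossing_family a m F -> size F = m -> 0 < m ->
  exists2 c, c < m &
    let L := in_segment a c in let R := in_segment (a + c + 1) (m - c - 1) in
    [/\ 0 < c -> (a, c) \in F, 0 < m - c - 1 -> (a + c + 1, m - c - 1) \in F &
        {in F, forall p, p != (a, m) -> L p || R p}].
Proof.
move=> ncF sizeF m_gt0; have [c cm [splitF sizeLR]] := noncrossing_split ncF m_gt0.
have ncL := noncrossing_family_filter a c ncF.
have ncR := noncrossing_family_filter (a + c + 1) (m - c - 1) ncF.
have := noncrossing_family_size ncL; have := noncrossing_family_size ncR.
rewrite (noncrossing_family_full_top ncF sizeF m_gt0) in sizeLR => leR leL.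
exists c => //; split=> // [c_gt0 | Rc_gt0].
  have /(noncrossing_family_full_top ncL) : size (filter (in_segment a c) F) = c by lia.
  by rewrite mem_filter => /(_ c_gt0) /andP[].
have /(noncrossing_family_full_top ncR) :
  size (filter (in_segment (a + c + 1) (m - c - 1)) F) = m - c - 1 by lia.
by rewrite mem_filter => /(_ Rc_gt0) /andP[].
Qed.

Lemma noncrossing_family_extend m a F : noncrossing_family a m F -> size F < m ->
  exists q, [/\ in_segment a m q, q \notin F & {in F, forall p, noncrossing q p}].
Proof.
elim/ltn_ind: m a F => m IH a F ncF ltFm; have [_ /allP segF _] := ncF.
have [amF | amNF] := boolP ((a, m) \in F); last first.
  exists (a, m); split=> // [|p Fp]; first by rewrite /in_segment /=; lia.
  exact/noncrossing_segment/segF.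
have [c cm [splitF sizeF]] := noncrossing_split ncF ltac:(lia).
have extend_on a' m' : m' < m -> a <= a' -> a' + m' <= a + m ->
    {in F, forall p q, p != (a, m) -> ~~ in_segment a' m' p ->
       in_segment a' m' q -> noncrossing q p} ->
    size (filter (in_segment a' m') F) < m' ->
    exists q, [/\ in_segment a m q, q \notin F & {in F, forall p, noncrossing q p}].
  move=> m'm aa' a'm' apart small.
  have [q [q_in qN ncq]] := IH m' m'm a' _ (noncrossing_family_filter _ _ ncF) small.
  have q_am : in_segment a m q by move: q_in; rewrite /in_segment; lia.
  exists q; split=> // [|p Fp].
    by apply: contra qN => Fq; rewrite mem_filter q_in.
  have [->|pm] := eqVneq p (a, m); first by rewrite noncrossingC noncrossing_segment.
  have [p_in|p_out] := boolP (in_segment a' m' p); last exact: apart.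
  by apply: ncq; rewrite mem_filter p_in.
have [ltL | geL] := ltnP (size (filter (in_segment a c) F)) c.
  apply: (extend_on a c) => //; try lia.
  move=> p Fp q pm p_out q_in; have := splitF p Fp pm; rewrite (negbTE p_out) /=.
  by move=> p_in; apply: noncrossing_disjoint; move: p_in q_in; rewrite /in_segment; lia.
apply: (extend_on (a + c + 1) (m - c - 1)); try lia.
move=> p Fp q pm p_out q_in; have := splitF p Fp pm; rewrite (negbTE p_out) orbF.
by move=> p_in; rewrite noncrossingC; apply: noncrossing_disjoint;
  move: p_in q_in; rewrite /in_segment; lia.
Qed.

Lemma eqmodn_lt2 n x y : x < 2 * n -> y < 2 * n -> x = y %[mod n] ->
  x = y \/ x + n = y \/ y + n = x.
Proof.
have small z : z < 2 * n -> z %% n = if z < n then z else z - n.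
  move=> lt_z2n; case: ltnP => [/modn_small // | le_nz].
  by rewrite -{1}(subnK le_nz) modnDr modn_small; lia.
by move=> /small -> /small ->; case: (ltnP x n); case: (ltnP y n); lia.
Qed.

Section Tube.
Variable n : nat.
Implicit Types (X Y : indec n) (t : nat).

Lemma qpos_lt Y : qpos Y < n. Proof. exact: ltn_ord. Qed.

Lemma ql_gt0 Y : 0 < ql Y. Proof. exact: (valP Y). Qed.

Lemma indec_eq X Y : qpos X = qpos Y -> ql X = ql Y -> X = Y.
Proof.
case: X Y => [[a b] Xb] [[c d] Yd]; rewrite /qpos /ql /= => ac bd.
by apply: val_inj; congr pair; [exact: val_inj | ].
Qed.

Definition rel_pos t Y : nat := (qpos Y + (n - t)) %% n.

Lemma rel_pos_lt t Y : rel_pos t Y < n.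
Proof. by rewrite /rel_pos ltn_mod; have := qpos_lt Y; lia. Qed.

Lemma qpos_rel t Y : t < n -> qpos Y = (t + rel_pos t Y) %% n.
Proof.
move=> lt_tn; rewrite /rel_pos modnDmr addnCA (subnKC (ltnW lt_tn)).
by rewrite modnDr modn_small // qpos_lt.
Qed.

Lemma rel_posE t s Y : t < n -> s < n -> qpos Y = (t + s) %% n -> rel_pos t Y = s.
Proof.
move=> lt_tn lt_sn posY; rewrite /rel_pos posY modnDml -addnA addnCA (subnKC (ltnW lt_tn)).
by rewrite modnDr modn_small.
Qed.

Lemma rel_pos_self Y : rel_pos (qpos Y) Y = 0.
Proof. by rewrite /rel_pos (subnKC (ltnW (qpos_lt Y))) modnn. Qed.

Definition rel_interval t Y : nat * nat := (rel_pos t Y, ql Y).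

Lemma rel_interval_self X : rel_interval (qpos X) X = (0, ql X).
Proof. by rewrite /rel_interval rel_pos_self. Qed.

Lemma rel_interval_surj t q : t < n -> q.1 < n -> 0 < q.2 -> exists Y, rel_interval t Y = q.
Proof.
case: q => s l /= lt_tn lt_sn l_gt0; have n_gt0 : 0 < n by lia.
pose Y := exist (fun p : 'I_n * nat => 0 < p.2) (Ordinal (ltn_pmod (t + s) n_gt0), l) l_gt0.
by exists Y; rewrite /rel_interval (@rel_posE t s Y).
Qed.

Lemma rel_interval_inj t X Y : t < n -> rel_interval t X = rel_interval t Y -> X = Y.
Proof.
by move=> lt_tn [eq_pos eq_ql]; apply: indec_eq => //; rewrite !(qpos_rel _ lt_tn) eq_pos.
Qed.

Lemma homdim_gt0P a b c d :
  reflect (exists2 j, j < b & ((a + j) %% n == c %% n) && (b - j <= d))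
          (0 < homdim n a b c d).
Proof.
rewrite /homdim -has_count; apply: (iffP hasP) => -[j].
  by rewrite mem_iota => lt_jb jP; exists j => //; lia.
by move=> lt_jb jP; exists j => //; rewrite mem_iota; lia.
Qed.

Lemma hom_tau_gt0P t Y X : t < n ->
  reflect (exists2 j, j < ql Y &
             (rel_pos t Y + j == rel_pos t X + n.-1 %[mod n]) && (ql Y - j <= ql X))
          (0 < homdim n (qpos Y) (ql Y) (tau_pos n (qpos X)) (ql X)).
Proof.
move=> lt_tn; rewrite (qpos_rel Y lt_tn) (qpos_rel X lt_tn) /tau_pos.
have shift u v j : (((t + u) %% n + j) %% n == (((t + v) %% n + n.-1) %% n) %% n) =
                   (u + j == v + n.-1 %[mod n]).
  by rewrite modn_mod !modnDml -!addnA eqn_modDl.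
by apply: (iffP (homdim_gt0P _ _ _ _)) => -[j lt_j]; [rewrite shift | rewrite -shift]; exists j.
Qed.

(* Inside a window of length at most [n - 1], the wrap-around of the tube is
   invisible and [Hom(Y, tau X)] is nonzero exactly when the intervals cross. *)
Lemma hom_tau_gt0_crossing t b Y X : t < n -> b <= n.-1 ->
  in_segment 0 b (rel_interval t Y) -> in_segment 0 b (rel_interval t X) ->
  (0 < homdim n (qpos Y) (ql Y) (tau_pos n (qpos X)) (ql X)) =
  crossing (rel_interval t X) (rel_interval t Y).
Proof.
rewrite /in_segment /crossing /= => lt_tn le_bn /andP[Yb _] /andP[Xb _].
have ltY := rel_pos_lt t Y; have ltX := rel_pos_lt t X.
apply/(hom_tau_gt0P Y X lt_tn)/idP => [[j lt_j /andP[/eqP eq_mod le_ql]] | crossYX].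
  by have := eqmodn_lt2 (_ : rel_pos t Y + j < 2 * n) (_ : rel_pos t X + n.-1 < 2 * n) eq_mod; lia.
exists (rel_pos t X - rel_pos t Y - 1); first lia.
apply/andP; split; last lia.
have -> : rel_pos t X + n.-1 = rel_pos t Y + (rel_pos t X - rel_pos t Y - 1) + n by lia.
by rewrite modnDr.
Qed.

Lemma ext1dim_eq0_noncrossing t b Y1 Y2 : t < n -> b <= n.-1 ->
  in_segment 0 b (rel_interval t Y1) -> in_segment 0 b (rel_interval t Y2) ->
  (ext1dim Y1 Y2 == 0) = noncrossing (rel_interval t Y1) (rel_interval t Y2).
Proof.
move=> lt_tn le_bn Y1b Y2b; rewrite /ext1dim addn_eq0 !eqn0Ngt.
by rewrite !(hom_tau_gt0_crossing lt_tn le_bn) // /noncrossing andbC.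
Qed.

Lemma ext1dimC X Y : ext1dim X Y = ext1dim Y X.
Proof. by rewrite /ext1dim addnC. Qed.

Lemma in_wingE X Y :
  in_wing X Y = (ql X <= n.-1) && in_segment 0 (ql X) (rel_interval (qpos X) Y).
Proof.
have lt_Xn := qpos_lt X; rewrite /in_wing /in_segment ql_gt0 andbT /=.
case: (ql X <= n.-1) => //=; apply/existsP/idP => [[s /andP[Ys /eqP posY]] | YX].
  by rewrite (rel_posE lt_Xn (ltn_ord s) posY).
by exists (Ordinal (rel_pos_lt (qpos X) Y)); rewrite /= -qpos_rel // eqxx andbT; lia.
Qed.

Lemma in_wing_ql X Y : in_wing X Y -> ql Y <= ql X.
Proof. by case/andP => _ /existsP[s /andP[le_ql _]]; lia. Qed.

Lemma in_wing_trans X Y Z : in_wing X Y -> in_wing Y Z -> in_wing X Z.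
Proof.
case/andP => le_Xn /existsP[s /andP[Ys /eqP posY]].
case/andP => _ /existsP[s' /andP[Zs' /eqP posZ]].
have lt_ss' : s + s' < n by have := ltn_ord s; have := ql_gt0 Z; lia.
rewrite /in_wing le_Xn; apply/existsP; exists (Ordinal lt_ss') => /=.
by rewrite posZ posY modnDml addnA eqxx andbT; lia.
Qed.

Lemma in_wing_sub X Y Z : in_wing X Y ->
  in_segment (rel_pos (qpos X) Y) (ql Y) (rel_interval (qpos X) Z) -> in_wing Y Z.
Proof.
have lt_Xn := qpos_lt X; set t := qpos X in lt_Xn *.
rewrite in_wingE /in_segment /= => /andP[le_Xn /andP[YX _]] /and3P[le_YZ ZY _].
have lt_diff : rel_pos t Z - rel_pos t Y < n by have := rel_pos_lt t Z; lia.
rewrite /in_wing; apply/andP; split; first lia.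
apply/existsP; exists (Ordinal lt_diff) => /=; apply/andP; split; first lia.
by rewrite (qpos_rel Z lt_Xn) (qpos_rel Y lt_Xn) modnDml -addnA subnKC.
Qed.

Lemma ql_rigid X : ext1dim X X = 0 -> ql X <= n.-1.
Proof.
move=> rigidX; rewrite leqNgt; apply/negP => lt_nX.
have : 0 < homdim n (qpos X) (ql X) (tau_pos n (qpos X)) (ql X).
  apply/homdim_gt0P; exists n.-1 => //.
  by rewrite /tau_pos modn_mod eqxx leq_subr.
by move: rigidX; rewrite /ext1dim; lia.
Qed.

(* For [X] sticking out of the wing of [Tk], a nonzero map [J -> tau X] or
   [X -> tau J] with [J] in the wing yields one with [Tk] in place of [J]. *)
Lemma ext1dim_wing_out Tk X J : in_wing Tk J -> ~~ in_wing Tk X ->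
  ext1dim X Tk = 0 -> ext1dim X J = 0.
Proof.
have lt_tn := qpos_lt Tk; have Tk0 := rel_pos_self Tk.
rewrite !in_wingE /in_segment /= => /andP[le_Tkn /andP[JTk _]].
rewrite le_Tkn ql_gt0 /= andbT -ltnNge; set t := qpos Tk in lt_tn Tk0 JTk *.
have := rel_pos_lt t X; have := rel_pos_lt t J => ltJ ltX outX.
rewrite /ext1dim => /eqP; rewrite addn_eq0 !eqn0Ngt => /andP[noTkX noXTk].
apply/eqP; rewrite addn_eq0 !eqn0Ngt; apply/andP; split.
- apply/negP => /(hom_tau_gt0P J X lt_tn) [j lt_j /andP[/eqP eq_mod le_ql]].
  have := eqmodn_lt2 (_ : rel_pos t J + j < 2 * n) (_ : rel_pos t X + n.-1 < 2 * n) eq_mod.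
  move=> /(_ ltac:(lia) ltac:(lia)) posX.
  move/negP: noTkX; apply; apply/(hom_tau_gt0P Tk X lt_tn).
  exists (rel_pos t J + j); first lia.
  by rewrite Tk0 add0n eq_mod eqxx /=; lia.
- apply/negP => /(hom_tau_gt0P X J lt_tn) [j lt_j /andP[/eqP eq_mod le_ql]].
  case: (leqP (rel_pos t J) j) => le_Jj; last first.
    have := eqmodn_lt2 (_ : rel_pos t X + j < 2 * n) (_ : rel_pos t J + n.-1 < 2 * n) eq_mod.
    by move=> /(_ ltac:(lia) ltac:(lia)); lia.
  move/negP: noXTk; apply; apply/(hom_tau_gt0P X Tk lt_tn).
  exists (j - rel_pos t J); first lia.
  apply/andP; split; last lia.
  rewrite Tk0 add0n -(eqn_modDr (rel_pos t J)) -addnA subnK //.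
  by rewrite [n.-1 + _]addnC eq_mod.
Qed.

End Tube.

Section MaximalRigid.
Variable n : nat.
Implicit Types (T : seq (indec n)) (X Y Tk : indec n).

Lemma rigid_ext1dim0 T : rigid T -> {in T &, forall X Y, ext1dim X Y = 0}.
Proof. by move=> /allP rigT X Y /rigT /allP XT /XT /eqP. Qed.

Lemma rigid_ql T X : rigid T -> X \in T -> ql X <= n.-1.
Proof. by move=> rigT XT; apply/ql_rigid/(rigid_ext1dim0 rigT). Qed.

Lemma maximal_rigid_mem T Y : maximal_rigid T ->
  ext1dim Y Y = 0 -> {in T, forall X, ext1dim X Y = 0} -> Y \in T.
Proof.
case=> rigT maxT YY TY; have := maxT [:: Y]; rewrite /in_add /= andbT; apply.
apply/allP => X; rewrite mem_cat mem_seq1 => XTY; apply/allP => Z.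
rewrite mem_cat mem_seq1; case/orP: XTY => [XT|/eqP->]; case/orP => [ZT|/eqP->].
- by rewrite (rigid_ext1dim0 rigT).
- by rewrite TY.
- by rewrite ext1dimC TY.
- by rewrite YY.
Qed.

Definition wing_intervals T Tk : seq (nat * nat) :=
  map (rel_interval (qpos Tk)) (filter (in_wing Tk) T).

Lemma size_wing_intervals T Tk : size (wing_intervals T Tk) = count (in_wing Tk) T.
Proof. by rewrite size_map size_filter. Qed.

Lemma mem_wing_intervals T Tk X :
  X \in T -> in_wing Tk X -> rel_interval (qpos Tk) X \in wing_intervals T Tk.
Proof. by move=> XT wX; apply: map_f; rewrite mem_filter wX. Qed.

Lemma wing_intervals_family T Tk :
  uniq T -> rigid T -> noncrossing_family 0 (ql Tk) (wing_intervals T Tk).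
Proof.
move=> uT rigT; have lt_tn := qpos_lt Tk; split.
- by rewrite map_inj_in_uniq ?filter_uniq // => X Y _ _; apply: rel_interval_inj.
- apply/allP => q /mapP[Y YF ->].
  by move: YF; rewrite mem_filter in_wingE => /andP[/andP[_ ->]].
- move=> p q /mapP[X XF ->] /mapP[Y YF ->].
  move: XF YF; rewrite !mem_filter !in_wingE.
  move=> /andP[/andP[le_n wX] XT] /andP[/andP[_ wY] YT].
  by rewrite -(ext1dim_eq0_noncrossing lt_tn le_n wX wY) (rigid_ext1dim0 rigT).
Qed.

Lemma count_in_wing T Tk : basic T -> maximal_rigid T -> Tk \in T ->
  count (in_wing Tk) T = ql Tk.
Proof.
move=> uT maxT TkT; have [rigT _] := maxT; have lt_tn := qpos_lt Tk.
have le_Tkn := rigid_ql rigT TkT; set t := qpos Tk in lt_tn.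
have ncF := wing_intervals_family Tk uT rigT.
apply/eqP; rewrite eqn_leq -size_wing_intervals (noncrossing_family_size ncF) leqNgt /=.
apply/negP => /(noncrossing_family_extend ncF) [q [q_in qF ncq]].
have [J rJ] : exists J : indec n, rel_interval t J = q.
  by apply: rel_interval_surj; move: q_in; rewrite /in_segment; lia.
have wJ : in_wing Tk J by rewrite in_wingE le_Tkn rJ.
have JT : J \in T.
  apply: (maximal_rigid_mem maxT).
    by apply/eqP; rewrite (ext1dim_eq0_noncrossing lt_tn le_Tkn) ?rJ ?noncrossingxx.
  move=> X XT; have [wX | wNX] := boolP (in_wing Tk X); last first.
    by apply: (ext1dim_wing_out wJ wNX); rewrite (rigid_ext1dim0 rigT).
  apply/eqP; move: (wX); rewrite in_wingE => /andP[_ X_in].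
  rewrite (ext1dim_eq0_noncrossing lt_tn le_Tkn X_in) ?rJ // noncrossingC.
  exact/ncq/mem_wing_intervals.
by move: qF; rewrite -rJ mem_wing_intervals.
Qed.

Definition wing_summand T Tk (q : nat * nat) : option (indec n) :=
  ohead [seq Y <- T | in_wing Tk Y && (rel_interval (qpos Tk) Y == q)].

Lemma wing_summand_some T Tk q Y : wing_summand T Tk q = Some Y ->
  [/\ Y \in T, in_wing Tk Y & rel_interval (qpos Tk) Y = q].
Proof.
rewrite /wing_summand; case E: [seq _ <- T | _] => [//|Y' s] [<-].
by have := mem_head Y' s; rewrite -E mem_filter => /andP[/andP[-> /eqP->] ->].
Qed.

Lemma wing_summand_mem T Tk q :
  q \in wing_intervals T Tk -> exists Y, wing_summand T Tk q = Some Y.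
Proof.
case/mapP => X; rewrite mem_filter => /andP[wX XT] ->.
have : X \in [seq Y <- T | in_wing Tk Y &&
                              (rel_interval (qpos Tk) Y == rel_interval (qpos Tk) X)].
  by rewrite mem_filter wX eqxx.
by rewrite /wing_summand; case: [seq _ <- T | _] => // Y s _; exists Y.
Qed.

Lemma wing_summand_ql0 T Tk q : q.2 = 0 -> wing_summand T Tk q = None.
Proof.
case E: wing_summand => [Y|] // q2; have [_ _ rY] := wing_summand_some E.
by move: (ql_gt0 Y); rewrite -rY /= in q2; rewrite q2.
Qed.

Lemma summand_or_zero_wing_summand T Tk q : summand_or_zero T (wing_summand T Tk q).
Proof. by case E: wing_summand => [Y|] //; case: (wing_summand_some E). Qed.

Lemma wing_summand_is_ind T Tk q : q \in wing_intervals T Tk ->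
  is_ind (wing_summand T Tk q) (qpos Tk + q.1) q.2.
Proof.
case/wing_summand_mem => Y E; exists Y => //; have [_ _ <-] := wing_summand_some E.
by rewrite (qpos_rel Y (qpos_lt Tk)).
Qed.

Lemma in_wing_wing_summand T Tk q Tj : Tj \in T -> in_wing Tk Tj ->
  (0 < q.2 -> q \in wing_intervals T Tk) ->
  in_segment q.1 q.2 (rel_interval (qpos Tk) Tj) -> in_wingo (wing_summand T Tk q) Tj.
Proof.
move=> TjT wTj qF Tj_q; have /qF/wing_summand_mem [Y E] : 0 < q.2.
  by move: Tj_q; rewrite /in_segment; lia.
have [_ wY rY] := wing_summand_some E; rewrite E /=; apply: (in_wing_sub wY).
by move: Tj_q; rewrite -rY.
Qed.

Lemma count_wing_summand T Tk q : basic T -> maximal_rigid T -> q.2 < ql Tk ->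
  count (fun Tj => [&& Tj != Tk, in_wing Tk Tj & in_wingo (wing_summand T Tk q) Tj]) T =
  qlo (wing_summand T Tk q).
Proof.
move=> uT maxT lt_q; case E: wing_summand => [Y|] /=; last first.
  by rewrite (@eq_count _ _ pred0) ?count_pred0 // => X /=; rewrite !andbF.
have [YT wY rY] := wing_summand_some E; rewrite -(count_in_wing uT maxT YT).
apply: eq_in_count => X XT /=; case wYX: (in_wing Y X); rewrite ?andbF ?andbT //.
rewrite (in_wing_trans wY wYX) andbT; apply: contraTneq wYX => ->.
by apply/negP => /in_wing_ql; rewrite -rY /= in lt_q; lia.
Qed.

Lemma subwing_tripleI X c (Y Z : option (indec n)) :
  1 < ql X <= n.-1 -> c < ql X ->
  (c = 0 -> Y = None) -> (0 < c -> is_ind Y (qpos X) c) ->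
  (ql X - c - 1 = 0 -> Z = None) ->
  (0 < ql X - c - 1 -> is_ind Z (qpos X + c + 1) (ql X - c - 1)) ->
  subwing_triple X Y Z.
Proof.
move=> Xn cX Y0 Yc Z0 Zc; case: (posnP c) => [c0 | c_gt0].
  right; split; first lia; right; split; first exact: Y0.
  by move: Zc; rewrite c0 subn0 addn0; apply; lia.
case: (posnP (ql X - c - 1)) => [Zc0 | Zc_gt0].
  right; split; first lia; left; split; last exact: Z0.
  by rewrite (_ : ql X - 1 = c); [apply: Yc | lia].
by left; split; [lia | exists c; split; [lia | apply: Yc | apply: Zc]].
Qed.

End MaximalRigid.

Theorem lemma2p5 (n : nat) (T : seq (indec n)) (Tk : indec n) :
  2 <= n -> basic T -> maximal_rigid T -> Tk \in T ->
  count (in_wing Tk) T = ql Tk /\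
  (1 < ql Tk ->
   exists Y Z : option (indec n),
     [/\ subwing_triple Tk Y Z,
         summand_or_zero T Y /\ summand_or_zero T Z,
         (forall Tj, Tj \in T -> Tj != Tk -> in_wing Tk Tj ->
            in_wingo Y Tj || in_wingo Z Tj),
         count (fun Tj => [&& Tj != Tk, in_wing Tk Tj & in_wingo Y Tj]) T = qlo Y &
         count (fun Tj => [&& Tj != Tk, in_wing Tk Tj & in_wingo Z Tj]) T = qlo Z]).
Proof.
move=> _ uT maxT TkT; have countTk := count_in_wing uT maxT TkT; split=> // ql_gt1.
have le_Tkn := rigid_ql maxT.1 TkT.
have ncF := wing_intervals_family Tk uT maxT.1.
have [|c cb /= [Yc Zc cover]] := noncrossing_family_full_split ncF _ (ltnW ql_gt1).
  by rewrite size_wing_intervals.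
exists (wing_summand T Tk (0, c)), (wing_summand T Tk (0 + c + 1, ql Tk - c - 1)); split.
- apply: (subwing_tripleI (c := c)); try lia.
  + exact: (@wing_summand_ql0 _ _ _ (0, c)).
  + by move=> /Yc /wing_summand_is_ind; rewrite addn0.
  + exact: (@wing_summand_ql0 _ _ _ (0 + c + 1, _)).
  + by move=> /Zc /wing_summand_is_ind; rewrite add0n addnA.
- by split; apply: summand_or_zero_wing_summand.
- move=> Tj TjT TjTk wTj; have TjF := mem_wing_intervals TjT wTj.
  have /(cover _ TjF) /orP[Tj_L | Tj_R] : rel_interval (qpos Tk) Tj != (0, ql Tk).
  + by apply: contra TjTk; rewrite -rel_interval_self => /eqP/(rel_interval_inj (qpos_lt Tk)) ->.
  + by rewrite in_wing_wing_summand.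
  + by rewrite orbC in_wing_wing_summand.
- by apply: count_wing_summand => //=; lia.
- by apply: count_wing_summand => //=; lia.
Qed.
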